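(* Let $x_0\in\mathbb{R}\cup\{+\infty\}$, $T<x_0$, $I=[T,x_0)$, and let $\phi_1,\phi_2\in C^1(I)$ satisfy $\phi_2(x)=o(\phi_1(x))$ as $x\to x_0$, $\phi_1(x)>0$ and $\phi_2(x)\neq0$ for all $x\in I$, and $W(x):=W(\phi_1,\phi_2;x)>0$ for all $x\in I$. Let $f\in\mathcal{C}(\phi_1,\phi_2;(T,x_0))$. Then: (i) $f$ is absolutely continuous on every compact subinterval of $(T,x_0)$; (ii) the functions $f_1^*,f_2^*,F^*$ are defined a.e. on $(T,x_0)$ and, for some Lebesgue null set $N$, are monotonic on $(T,x_0)\setminus N$: $f_2^*$ is increasing; $f_1^*$ and $F^*$ have opposite types of monotonicity; and $(\operatorname{sign}\phi_2)\cdot F^*$ is increasing; (iii) for any real constants $a_1,a_2$ and any nontrivial linear combination $\tilde\phi$ of $\phi_1,\phi_2$, the function $[f(x)+a_1\phi_1(x)+a_2\phi_2(x)]/\tilde\phi(x)$ is either constant or strictly monotonic on a suitable deleted one-sided neighborhood (within $(T,x_0)$) of each of the endpoints $T$ and $x_0$; (iv) the two limits $$\lim_{x\to x_0}\frac{f(x)}{\phi_1(x)},\qquad \lim_{x\to x_0}\frac{(f(x)/\phi_2(x))'}{(\phi_1(x)/\phi_2(x))'}$$ exist in $\overline{\mathbb{R}}=\mathbb{R}\cup\{\pm\infty\}$ and are equal.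
   Context: Limits as $x\to x_0$ are taken for $x<x_0$, over points where the functions are defined. For differentiable $g,h$, $W(g,h;x):=g(x)h'(x)-g'(x)h(x)$. Generalized convexity: for a pair $(\psi_1,\psi_2)$ of continuous functions on an interval $J$, a function $f:J\to\mathbb{R}$ belongs to $\mathcal{C}(\psi_1,\psi_2;J)$ iff for all $t_1<t_2<t_3$ in $J$ $$\det\begin{pmatrix}\psi_1(t_1)&\psi_1(t_2)&\psi_1(t_3)\\ \psi_2(t_1)&\psi_2(t_2)&\psi_2(t_3)\\ f(t_1)&f(t_2)&f(t_3)\end{pmatrix}\ge0.$$ Definitions: at points $t$ where $f$ is differentiable, $f_1^*(t):=W(f,\phi_2;t)/W(t)$, $f_2^*(t):=-W(f,\phi_1;t)/W(t)$; $\Phi(x):=\phi_2(T)\phi_1(x)-\phi_1(T)\phi_2(x)$; $F^*(t):=\phi_1(T)f_1^*(t)+\phi_2(T)f_2^*(t)=W(\Phi,f;t)/W(t)$. ''Increasing'' means nondecreasing. *)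

From HB Require Import structures.
From mathcomp Require Import all_boot all_order all_algebra.
From mathcomp Require Import all_classical all_reals all_analysis.
Set Implicit Arguments.
Unset Strict Implicit.
Unset Printing Implicit Defensive.
Import Order.TTheory GRing.Theory Num.Theory.
Import numFieldNormedType.Exports.
Local Open Scope classical_set_scope.
Local Open Scope ring_scope.

Section Defs.
Variable R : realType.

(* The filter "x -> x0, x < x0" for x0 in R \cup {+oo} (-oo is never used,
   since x0 > T always). *)
Definition toward (x0 : \bar R) : set_system R :=
  match x0 with
  | EFin r => at_left r
  | EPInf => pinfty_nbhs R
  | ENInf => ninfty_nbhs R
  end.

Definition Ico_e (T : R) (x0 : \bar R) : set R :=
  [set x | T <= x /\ (x%:E < x0)%E].
Definition Ioo_e (a : R) (x0 : \bar R) : set R :=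
  [set x | a < x /\ (x%:E < x0)%E].

Definition C1_Ico (T : R) (x0 : \bar R) (phi dphi : R -> R) : Prop :=
  [/\ (forall x, Ioo_e T x0 x -> is_derive x (1 : R) phi (dphi x)),
      (fun h : R => (phi (T + h) - phi T) / h) @ 0^'+ --> dphi T
    & {within Ico_e T x0, continuous dphi}].

Definition Wr (g dg h dh : R -> R) (x : R) : R := g x * dh x - dg x * h x.

Definition gen_convex (psi1 psi2 : R -> R) (J : set R) (f : R -> R) : Prop :=
  forall t1 t2 t3 : R, J t1 -> J t2 -> J t3 -> t1 < t2 -> t2 < t3 ->
    0 <= \det (\matrix_(i < 3, j < 3)
                 (nth (fun _ => 0) [:: psi1; psi2; f] i) (nth 0 [:: t1; t2; t3] j)).

Definition abs_cont_on (a b : R) (f : R -> R) : Prop :=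
  forall eps : R, 0 < eps -> exists2 delta : R, 0 < delta &
    forall (n : nat) (u v : nat -> R),
      (forall k, (k < n)%N -> a <= u k /\ u k <= v k /\ v k <= b) ->
      (forall k l, (k < l)%N -> (l < n)%N -> v k <= u l) ->
      \sum_(k < n) (v k - u k) < delta ->
      \sum_(k < n) `|f (v k) - f (u k)| < eps.

(* f_1^*, f_2^*, F^* (meaningful at points where f is differentiable) *)
Definition f1star (phi1 dphi1 phi2 dphi2 f : R -> R) (t : R) : R :=
  Wr f (derive1 f) phi2 dphi2 t / Wr phi1 dphi1 phi2 dphi2 t.
Definition f2star (phi1 dphi1 phi2 dphi2 f : R -> R) (t : R) : R :=
  - (Wr f (derive1 f) phi1 dphi1 t / Wr phi1 dphi1 phi2 dphi2 t).
Definition Fstar (T : R) (phi1 dphi1 phi2 dphi2 f : R -> R) (t : R) : R :=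
  phi1 T * f1star phi1 dphi1 phi2 dphi2 f t
  + phi2 T * f2star phi1 dphi1 phi2 dphi2 f t.

Definition incr_on (D : set R) (g : R -> R) : Prop :=
  forall x y, D x -> D y -> x <= y -> g x <= g y.
Definition decr_on (D : set R) (g : R -> R) : Prop :=
  forall x y, D x -> D y -> x <= y -> g y <= g x.
Definition strincr_on (D : set R) (g : R -> R) : Prop :=
  forall x y, D x -> D y -> x < y -> g x < g y.
Definition strdecr_on (D : set R) (g : R -> R) : Prop :=
  forall x y, D x -> D y -> x < y -> g y < g x.
Definition const_on (D : set R) (g : R -> R) : Prop :=
  forall x y, D x -> D y -> g x = g y.

Definition const_or_strmono_on (D : set R) (g : R -> R) : Prop :=
  const_on D g \/ strincr_on D g \/ strdecr_on D g.

End Defs.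

From HB Require Import structures.
From mathcomp Require Import all_boot all_order all_algebra.
From mathcomp Require Import all_classical all_reals all_analysis.
From mathcomp Require Import ring lra.
Set Implicit Arguments.
Unset Strict Implicit.
Unset Printing Implicit Defensive.
Import Order.TTheory GRing.Theory Num.Theory.
Import numFieldNormedType.Exports.
Local Open Scope classical_set_scope.
Local Open Scope ring_scope.

(* Put Hf := f / phi1 and U := phi2 / phi1.  Since U' = W / phi1^2 > 0, U is strictly
   increasing, and U -> 0 at x0 forces U < 0, hence phi2 < 0.  Dividing the determinant by
   phi1 t1 * phi1 t2 * phi1 t3 shows that Hf is convex with respect to U: the slopes
   S(x, y) = (Hf y - Hf x) / (U y - U x) increase in both endpoints.  So the left slope
   L(x) = sup_(y < x) S(y, x) increases, and f is differentiable exactly where the right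
   slopes come arbitrarily close to L(x); the other points (kinks) are separated by rationals,
   hence countable.  Off the kinks f_2^* = L, f_1^* = Hf - U L and F^* = phi1 T (Hf + (U T - U) L),
   whose monotonicity follows from that of S and L.  Bounded slopes and a Lipschitz U make f
   Lipschitz on compact intervals.  For (iii), g = (f + a1 phi1 + a2 phi2) / (phi1 (c1 + c2 U))
   satisfies the same determinant inequality up to the sign of c1 + c2 U, which is constant
   near each end; this gives the three-point rule "g t1 < g t2 implies g t2 < g t3" (or the
   same for -g), which forces g to be eventually constant or strictly monotone.  For (iv),
   (f / phi2)' / (phi1 / phi2)' = f_1^* is squeezed between Hf m - U m S(m, x) and lim Hf,
   both governed by the monotone slopes S(m, x). *)

Section filter_limits.
Context {T : Type} {F : set_system T} {FF : Filter F} {R : realFieldType}.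
Implicit Types (s g : T -> R).

Lemma cvg_near_eq s g (l : R) :
  (\forall x \near F, s x = g x) -> s @ F --> l -> g @ F --> l.
Proof. by move=> e; apply: cvg_trans; apply: near_eq_cvg; apply: filterS e. Qed.

Lemma cvgry_le_near s g : (\forall x \near F, s x <= g x) ->
  s @ F --> +oo -> g @ F --> +oo.
Proof.
move=> sg /cvgryPge hs; apply/cvgryPge => A.
by apply: filterS2 (hs A) sg => x; exact: le_trans.
Qed.

Lemma cvgry_affine (a c : R) s : 0 < c -> s @ F --> +oo ->
  (fun x => a + c * s x) @ F --> +oo.
Proof.
move=> c0 /cvgryPge hs; apply/cvgryPge => A.
apply: filterS (hs ((A - a) / c)) => x hx.
by rewrite -lerBlDl -ler_pdivrMl // mulrC.
Qed.

Lemma cvg_EFin_real s (l : R) : s @ F --> l -> (fun x => (s x)%:E) @ F --> l%:E.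
Proof. by move=> h; apply: cvg_EFin => //; exact: nearW. Qed.

End filter_limits.

Section toward_filter.
Variable R : realType.
Implicit Types (T x : R).

#[global] Instance toward_proper (x0 : \bar R) : ProperFilter (toward x0).
Proof. by case: x0 => [r||] /=; exact: _. Qed.

Lemma near_toward_gt (x0 : \bar R) x : (x%:E < x0)%E ->
  \forall y \near toward x0, x < y /\ (y%:E < x0)%E.
Proof.
case: x0 => [r||] //= hx.
- rewrite lte_fin in hx; near=> y; split.
    by near: y; exact: nbhs_left_gt.
  by rewrite lte_fin; near: y; exact: nbhs_left_lt.
- near=> y; split; last exact: ltry.
  by near: y; apply: nbhs_pinfty_gt; exact: num_real.
Unshelve. all: by end_near. Qed.

Lemma near_toward (x0 : \bar R) x (P : R -> Prop) : (x%:E < x0)%E ->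
  (forall y, x < y -> (y%:E < x0)%E -> P y) -> \forall y \near toward x0, P y.
Proof. by move=> hx hP; apply: filterS (near_toward_gt hx) => y []; exact: hP. Qed.

Lemma near_Ioo_e T (x0 : \bar R) x : Ioo_e T x0 x -> \forall h \near (0:R), Ioo_e T x0 (x + h).
Proof.
move=> [Tx xx0]; have [y [xy yx0]] := filter_ex (near_toward_gt xx0).
have e0 : 0 < Num.min (x - T) (y - x) by rewrite lt_min !subr_gt0 Tx xy.
apply: filterS (@nbhs0_lt R R^o _ e0) => h; rewrite lt_min => /andP [h1 h2].
have := ler_norm h; have : - `|h| <= h by rewrite lerNl ler_normr lexx orbT.
move=> hl hr; split; first lra.
by apply: le_lt_trans yx0; rewrite lee_fin; lra.
Qed.

End toward_filter.

Section difference_quotient.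
Variable R : realType.
Implicit Types (g k : R -> R) (x a b l : R).

Definition dq g x (h : R) := (g (x + h) - g x) / h.

Lemma dq_derivableE g x :
  (fun h : R => h^-1 *: ((g \o shift x) (h *: (1:R)) - g x)) = dq g x.
Proof. by apply/funext => h; rewrite /dq /= /shift /= [h%:A]mulr1 [h + x]addrC mulrC. Qed.

Lemma dq_cvg_derive g x l :
  dq g x @ (0:R)^' --> l -> derivable g x 1 /\ derive1 g x = l.
Proof.
move=> hq; split; first by rewrite /derivable dq_derivableE; apply/cvg_ex; exists l.
rewrite /derive1; have -> : (fun h : R => h^-1 *: (g (h + x) - g x)) = dq g x.
  by apply/funext => h; rewrite /dq [h + x]addrC mulrC.
exact: cvg_lim.
Qed.

Lemma derivable_dq_cvg g x : derivable g x 1 -> dq g x @ (0:R)^' --> derive1 g x.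
Proof.
rewrite /derivable dq_derivableE => /cvg_ex [l hl].
by have [_ ->] := dq_cvg_derive hl.
Qed.

Lemma is_derive_dq_cvg g x d : is_derive x 1 g d -> dq g x @ (0:R)^' --> d.
Proof. by move=> [dg dv]; have := derivable_dq_cvg dg; rewrite derive1E dv. Qed.

Lemma dq_cvg_continuous g x l :
  dq g x @ (0:R)^' --> l -> (fun h => g (x + h)) @ (0:R)^' --> g x.
Proof.
move=> hq; have e : \forall h \near (0:R)^', g x + h * dq g x h = g (x + h).
  near=> h; rewrite /dq mulrC divfK; first by rewrite addrC subrK.
  by near: h; exact: nbhs_dnbhs_neq.
apply: cvg_near_eq e _.
have : (fun h => g x + h * dq g x h) @ (0:R)^' --> g x + 0 * l.
  by apply: cvgD; [exact: cvg_cst | apply: cvgM => //; exact: cvg_within].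
by rewrite mul0r addr0.
Unshelve. all: by end_near. Qed.

Lemma dqM g k x a b : dq g x @ (0:R)^' --> a -> dq k x @ (0:R)^' --> b ->
  dq (fun y => g y * k y) x @ (0:R)^' --> a * k x + g x * b.
Proof.
move=> hg hk; have e : \forall h \near (0:R)^',
    dq g x h * k (x + h) + g x * dq k x h = dq (fun y => g y * k y) x h.
  near=> h; have hn : h != 0 by near: h; exact: nbhs_dnbhs_neq.
  by rewrite /dq; field.
apply: cvg_near_eq e _; apply: cvgD; last by apply: cvgM => //; exact: cvg_cst.
by apply: cvgM => //; exact: dq_cvg_continuous hk.
Unshelve. all: by end_near. Qed.

Lemma dq_div g k x a b : dq g x @ (0:R)^' --> a -> dq k x @ (0:R)^' --> b ->
  k x != 0 -> (\forall h \near (0:R)^', k (x + h) != 0) ->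
  dq (fun y => g y / k y) x @ (0:R)^' --> (a * k x - g x * b) / (k x ^+ 2).
Proof.
move=> hg hk kx0 kn0; have e : \forall h \near (0:R)^',
    (dq g x h * k x - g x * dq k x h) * (k (x + h) * k x)^-1
    = dq (fun y => g y / k y) x h.
  near=> h; have hn : h != 0 by near: h; exact: nbhs_dnbhs_neq.
  have kh : k (x + h) != 0 by near: h; exact: kn0.
  by rewrite /dq; field; rewrite hn kx0 kh.
apply: cvg_near_eq e _; rewrite expr2; apply: cvgM.
  by apply: cvgB; apply: cvgM => //; exact: cvg_cst.
apply: cvgV; first by rewrite mulf_neq0.
by apply: cvgM; [exact: dq_cvg_continuous hk | exact: cvg_cst].
Unshelve. all: by end_near. Qed.

Lemma dq_eq_near g k x l : (\forall h \near (0:R), g (x + h) = k (x + h)) ->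
  dq g x @ (0:R)^' --> l -> dq k x @ (0:R)^' --> l.
Proof.
move=> e; apply: cvg_near_eq; have ex : g x = k x.
  by have := nbhs_singleton e; rewrite addr0.
by apply: cvg_within; apply: filterS e => h eh; rewrite /dq eh ex.
Qed.

End difference_quotient.

Section lipschitz_segment.
Variable R : realType.
Implicit Types (a b x y M : R) (g k : R -> R).

Definition lipschitz_seg a b g := exists M, 0 <= M /\
  forall x y, a <= x <= b -> a <= y <= b -> `|g y - g x| <= M * `|y - x|.

Lemma lipschitz_seg_bounded a b g :
  lipschitz_seg a b g -> exists B, forall x, a <= x <= b -> `|g x| <= B.
Proof.
move=> [M [M0 hM]]; exists (`|g a| + M * `|b - a|) => x /[dup] hx /andP [ax xb].
have ha : a <= a <= b by rewrite lexx (le_trans ax xb).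
have hxa : `|x - a| <= `|b - a| by rewrite !ger0_norm ?subr_ge0 ?lerD2r ?(le_trans ax xb).
have := hM a x ha hx; have : M * `|x - a| <= M * `|b - a| by exact: ler_wpM2l.
have : `|g x| <= `|g a| + `|g x - g a|.
  by rewrite -{1}(subrK (g a) (g x)) addrC; apply: ler_normD.
lra.
Qed.

Lemma lipschitz_seg_eq a b g k : (forall x, a <= x <= b -> g x = k x) ->
  lipschitz_seg a b g -> lipschitz_seg a b k.
Proof. by move=> e [M [M0 hM]]; exists M; split => // x y hx hy; rewrite -!e //; exact: hM. Qed.

Lemma lipschitz_segM a b g k : lipschitz_seg a b g -> lipschitz_seg a b k ->
  lipschitz_seg a b (fun x => g x * k x).
Proof.
move=> lg lk; have [Bg hBg] := lipschitz_seg_bounded lg.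
have [Bk hBk] := lipschitz_seg_bounded lk.
move: lg lk => [Mg [Mg0 hg]] [Mk [Mk0 hk]].
exists (`|Bg| * Mk + `|Bk| * Mg); split; first by rewrite addr_ge0 ?mulr_ge0.
move=> x y hx hy.
have -> : g y * k y - g x * k x = g y * (k y - k x) + k x * (g y - g x) by ring.
apply: (le_trans (ler_normD _ _)); rewrite !normrM mulrDl -!mulrA.
apply: lerD; apply: ler_pM => //.
- exact: le_trans (hBg y hy) (ler_norm _).
- exact: hk.
- exact: le_trans (hBk x hx) (ler_norm _).
- exact: hg.
Qed.

Lemma lipschitz_segV a b g m : 0 < m -> (forall x, a <= x <= b -> m <= g x) ->
  lipschitz_seg a b g -> lipschitz_seg a b (fun x => (g x)^-1).
Proof.
move=> m0 hm [M [M0 hM]]; exists (M / (m * m)).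
split; first by rewrite divr_ge0 // mulr_ge0 // ltW.
move=> x y hx hy.
have gx := lt_le_trans m0 (hm x hx); have gy := lt_le_trans m0 (hm y hy).
have -> : (g y)^-1 - (g x)^-1 = (g x - g y) / (g x * g y) by field; rewrite !gt_eqF.
rewrite normrM normfV distrC [`|g x * g y|]gtr0_norm ?mulr_gt0 //.
apply: (@le_trans _ _ (M * `|y - x| / (g x * g y))).
  by apply: ler_wpM2r; [rewrite invr_ge0 mulr_ge0 // ltW | exact: hM].
rewrite [M / _ * _]mulrAC; apply: ler_wpM2l; first exact: mulr_ge0.
rewrite lef_pV2 ?posrE ?mulr_gt0 //.
by apply: ler_pM; [exact: ltW | exact: ltW | exact: hm | exact: hm].
Qed.

Lemma lipschitz_seg_abs_cont a b g : lipschitz_seg a b g -> abs_cont_on a b g.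
Proof.
move=> [M [M0 hM]] eps e0; exists (eps / (M + 1)); first by rewrite divr_gt0 //; lra.
move=> n u v huv _ hs.
have hsum : \sum_(k < n) `|g (v k) - g (u k)| <= \sum_(k < n) M * (v k - u k).
  apply: ler_sum => k _; have [uk [ukv vk]] := huv k (ltn_ord k).
  rewrite -[v k - u k]ger0_norm ?subr_ge0 //.
  by apply: hM; rewrite ?uk ?vk /=; lra.
apply: (le_lt_trans hsum); rewrite -mulr_sumr.
have : M * \sum_(k < n) (v k - u k) <= M * (eps / (M + 1)).
  exact/ler_wpM2l/ltW.
have : M * (eps / (M + 1)) < eps by rewrite mulrA ltr_pdivrMr; nra.
lra.
Qed.

Lemma C1_lipschitz_seg a b (phi dphi : R -> R) :
  (forall x, a <= x <= b -> is_derive x 1 phi (dphi x)) ->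
  {within `[a, b], continuous dphi} -> lipschitz_seg a b phi.
Proof.
move=> hd hc; have [ab|ba] := leP a b; last first.
  by exists 0; split => // x y /andP [h1 h2]; lra.
have [c _ hc2] : exists2 c, c \in `[a, b] & forall t, t \in `[a, b] -> `|dphi t| <= `|dphi c|.
  by apply: EVT_max ab _ => t; apply: cvg_norm; exact: hc.
exists `|dphi c|; split => // x y hx hy.
wlog xy : x y hx hy / x <= y.
  move=> H; have [|/ltW yx] := leP x y; first exact: H.
  by rewrite distrC [`|y - x|]distrC; exact: H.
have sub z : x <= z <= y -> a <= z <= b.
  move=> /andP [h1 h2]; case/andP: hx => h3 h4; case/andP: hy => h5 h6.
  by apply/andP; split; lra.
have [z hz ->] : exists2 z, z \in `[x, y] & phi y - phi x = dphi z * (y - x).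
  apply: MVT_segment => //.
    by move=> z; rewrite in_itv /= => /andP [h1 h2]; apply/hd/sub; rewrite !ltW.
  apply: derivable_within_continuous => z; rewrite in_itv /= => hz.
  by have [] := hd z (sub z hz).
rewrite normrM; apply: ler_wpM2r => //; apply: hc2.
by move: hz; rewrite !in_itv /=; exact: sub.
Qed.

End lipschitz_segment.

Section three_point_monotone.
Variable R : realType.
Implicit Types (D E : set R) (g : R -> R).

Definition three_point_incr D g := forall t1 t2 t3,
  D t1 -> D t2 -> D t3 -> t1 < t2 -> t2 < t3 ->
  (g t1 < g t2 -> g t2 < g t3) /\ (g t1 <= g t2 -> g t2 <= g t3).

Lemma const_or_strmono_onS D E g :
  E `<=` D -> const_or_strmono_on D g -> const_or_strmono_on E g.
Proof.
by move=> sub [h|[h|h]]; [left|right; left|right; right] => x y /sub hx /sub hy; exact: h.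
Qed.

Lemma const_or_strmono_onN D g :
  const_or_strmono_on D (fun x => - g x) -> const_or_strmono_on D g.
Proof.
case=> [h|[h|h]]; [left|right; right|right; left] => x y hx hy.
- exact/oppr_inj/h.
- by move=> xy; have := h x y hx hy xy; rewrite ltrN2.
- by move=> xy; have := h x y hx hy xy; rewrite ltrN2.
Qed.

Lemma three_point_incr_right_end D g : three_point_incr D g -> (exists m, D m) ->
  exists c, D c /\ const_or_strmono_on [set x | D x /\ c < x] g.
Proof.
move=> P [m Dm].
have [[t1 [t2 [D1 [D2 [h12 hg]]]]]|nA] :=
  pselect (exists t1 t2, D t1 /\ D t2 /\ t1 < t2 /\ g t1 < g t2).
  exists t2; split => //; right; left => x y [Dx t2x] [Dy _] xy.
  have [P1 _] := P t1 t2 x D1 D2 Dx h12 t2x.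
  have [P2 _] := P t2 x y D2 Dx Dy t2x xy.
  exact: P2 (P1 hg).
have ni t1 t2 : D t1 -> D t2 -> t1 < t2 -> g t2 <= g t1.
  by move=> D1 D2 h12; rewrite leNgt; apply/negP => hlt; apply: nA; exists t1, t2.
have [[t2 [t3 [D2 [D3 [h23 he]]]]]|nB] :=
  pselect (exists t2 t3, D t2 /\ D t3 /\ t2 < t3 /\ g t2 = g t3).
  exists t2; split => //; left.
  have key x : D x -> t2 < x -> g x = g t2.
    move=> Dx t2x; apply/eqP; rewrite eq_le ni //=.
    have [xt3|t3x|->] := ltgtP x t3; rewrite he //; first exact: ni.
    by have [_ P2] := P t2 t3 x D2 D3 Dx h23 t3x; apply: P2; rewrite he.
  by move=> x y [Dx hx] [Dy hy]; rewrite !key.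
exists m; split => //; right; right => x y [Dx _] [Dy _] xy.
by rewrite lt_neqAle ni // andbT; apply/negP => /eqP e; apply: nB; exists x, y.
Qed.

Lemma three_point_incr_left_end D g : three_point_incr D g -> (exists m, D m) ->
  exists c, D c /\ const_or_strmono_on [set x | D x /\ x < c] g.
Proof.
move=> P [m Dm].
have [[t2 [t3 [D2 [D3 [h23 hg]]]]]|nA] :=
  pselect (exists t2 t3, D t2 /\ D t3 /\ t2 < t3 /\ g t3 < g t2).
  exists t2; split => //; right; right => x y [Dx xt2] [Dy yt2] xy.
  have gy : g t2 < g y.
    rewrite ltNge; apply/negP => h; have [_ P2] := P y t2 t3 Dy D2 D3 yt2 h23.
    by have := P2 h; rewrite leNgt hg.
  rewrite ltNge; apply/negP => h; have [_ P2] := P x y t2 Dx Dy D2 xy yt2.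
  by have := P2 h; rewrite leNgt gy.
have nd t1 t2 : D t1 -> D t2 -> t1 < t2 -> g t1 <= g t2.
  by move=> D1 D2 h12; rewrite leNgt; apply/negP => hlt; apply: nA; exists t1, t2.
have [[t2 [t3 [D2 [D3 [h23 he]]]]]|nB] :=
  pselect (exists t2 t3, D t2 /\ D t3 /\ t2 < t3 /\ g t2 = g t3).
  exists t3; split => //; left.
  have key x : D x -> x < t3 -> g x = g t3.
    move=> Dx xt3; apply/eqP; rewrite eq_le nd //=.
    have [xt2|t2x|->] := ltgtP x t2; rewrite -he //; last exact: nd.
    rewrite leNgt; apply/negP => h; have [P1 _] := P x t2 t3 Dx D2 D3 xt2 h23.
    by have := P1 h; rewrite he ltxx.
  by move=> x y [Dx hx] [Dy hy]; rewrite !key.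
exists m; split => //; right; left => x y [Dx _] [Dy _] xy.
by rewrite lt_neqAle nd // andbT; apply/negP => /eqP e; apply: nB; exists x, y.
Qed.

End three_point_monotone.

Lemma det_mx33_funs (R : comPzRingType) (p q r : R -> R) (t1 t2 t3 : R) :
  \det (\matrix_(i < 3, j < 3)
          (nth (fun _ => 0) [:: p; q; r] i) (nth 0 [:: t1; t2; t3] j)) =
  p t1 * (q t2 * r t3 - q t3 * r t2) - p t2 * (q t1 * r t3 - q t3 * r t1)
  + p t3 * (q t1 * r t2 - q t2 * r t1).
Proof.
rewrite (expand_det_row _ 0) !big_ord_recl big_ord0 /cofactor.
rewrite !(expand_det_row _ 0) !big_ord_recl !big_ord0 /cofactor !det_mx11 /= !mxE /=.
by rewrite !expr0 !expr1 /=; ring.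
Qed.

Lemma mediant_between (R : realFieldType) (a b A B : R) :
  0 < a -> 0 < b -> 0 <= a * B - b * A ->
  A / a <= (A + B) / (a + b) /\ (A + B) / (a + b) <= B / b.
Proof.
move=> a0 b0 h; split; rewrite -subr_ge0.
  have -> : (A + B) / (a + b) - A / a = (a * B - b * A) / (a * (a + b)).
    by field; rewrite !gt_eqF ?addr_gt0.
  by rewrite divr_ge0 // mulr_ge0 // ltW ?addr_gt0.
have -> : B / b - (A + B) / (a + b) = (a * B - b * A) / (b * (a + b)).
  by field; rewrite !gt_eqF ?addr_gt0.
by rewrite divr_ge0 // mulr_ge0 // ltW ?addr_gt0.
Qed.

Lemma C1_Ico_cvg_right (R : realType) (x0 : \bar R) (T : R) (phi dphi : R -> R) :
  C1_Ico T x0 phi dphi -> (fun h => phi (T + h)) @ (0:R)^'+ --> phi T.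
Proof.
case=> _ hq _; have e : \forall h \near (0:R)^'+,
    phi T + h * ((phi (T + h) - phi T) / h) = phi (T + h).
  near=> h; have hn : h != 0 by near: h; exact: nbhs_right_neq.
  by rewrite mulrC divfK // addrC subrK.
apply: cvg_near_eq e _.
have : (fun h => phi T + h * ((phi (T + h) - phi T) / h)) @ (0:R)^'+ --> phi T + 0 * dphi T.
  by apply: cvgD; [exact: cvg_cst | apply: cvgM => //; exact: cvg_within].
by rewrite mul0r addr0.
Unshelve. all: by end_near. Qed.

Section convexity_wrt_ratio.
Variables (R : realType) (x0 : \bar R) (T : R) (phi1 dphi1 phi2 dphi2 f : R -> R).
Hypothesis Tx0 : (T%:E < x0)%E.
Hypothesis phi1_C1 : C1_Ico T x0 phi1 dphi1.
Hypothesis phi2_C1 : C1_Ico T x0 phi2 dphi2.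
Hypothesis phi2_o_phi1 : (fun x => phi2 x / phi1 x) @ toward x0 --> (0 : R).
Hypothesis phi1_gt0 : forall x, Ico_e T x0 x -> 0 < phi1 x.
Hypothesis W_gt0 : forall x, Ico_e T x0 x -> 0 < Wr phi1 dphi1 phi2 dphi2 x.
Hypothesis f_convex : gen_convex phi1 phi2 (Ioo_e T x0) f.

Local Notation J := (Ioo_e T x0).
Local Notation W := (Wr phi1 dphi1 phi2 dphi2).

Definition Hf x := f x / phi1 x.
Definition U x := phi2 x / phi1 x.
Definition dU x := W x / phi1 x ^+ 2.
Definition slope x y := (Hf y - Hf x) / (U y - U x).

Lemma J_gt x : J x -> T < x. Proof. by case. Qed.
Lemma J_lt x : J x -> (x%:E < x0)%E. Proof. by case. Qed.
Lemma J_Ico x : J x -> Ico_e T x0 x. Proof. by case=> ? ?; split => //; exact: ltW. Qed.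
Lemma Ico_T : Ico_e T x0 T. Proof. by split. Qed.
Lemma phi1_J_gt0 x : J x -> 0 < phi1 x. Proof. by move/J_Ico; exact: phi1_gt0. Qed.
Lemma phi1_J_neq0 x : J x -> phi1 x != 0. Proof. by move/phi1_J_gt0/lt0r_neq0. Qed.
Lemma W_J_gt0 x : J x -> 0 < W x. Proof. by move/J_Ico; exact: W_gt0. Qed.

Lemma J_between x y z : J x -> J y -> x <= z -> z <= y -> J z.
Proof.
move=> [Tx _] [_ yx] xz zy; split; first exact: lt_le_trans Tx xz.
by apply: le_lt_trans yx; rewrite lee_fin.
Qed.

Lemma J_itv a b x : J a -> J b -> a <= x <= b -> J x.
Proof. by move=> Ja Jb /andP [h1 h2]; exact: J_between Ja Jb h1 h2. Qed.

Lemma J_right x : J x -> exists y, J y /\ x < y.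
Proof.
move=> [Tx xx]; have [y [xy yx]] := filter_ex (near_toward_gt xx).
by exists y; split => //; split => //; exact: lt_trans xy.
Qed.

Lemma J_left x : J x -> exists y, J y /\ y < x.
Proof.
move=> [Tx xx]; exists ((T + x) / 2); split; last lra.
by split; [lra | apply: lt_trans xx; rewrite lte_fin; lra].
Qed.

Lemma J_nonempty : exists m, J m.
Proof. by have [y [Ty yx]] := filter_ex (near_toward_gt Tx0); exists y. Qed.

Lemma J_dnear x : J x -> \forall h \near (0:R)^', J (x + h).
Proof. by move=> /near_Ioo_e; exact: cvg_within. Qed.

Lemma J_near_toward x : J x -> \forall y \near toward x0, J y /\ x < y.
Proof.
move=> Jx; apply: (near_toward (J_lt Jx)) => y xy yx; split => //.
by split => //; exact: lt_trans (J_gt Jx) xy.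
Qed.

Lemma dq_phi1 x : J x -> dq phi1 x @ (0:R)^' --> dphi1 x.
Proof. by case: phi1_C1 => d _ _ /d; exact: is_derive_dq_cvg. Qed.

Lemma dq_phi2 x : J x -> dq phi2 x @ (0:R)^' --> dphi2 x.
Proof. by case: phi2_C1 => d _ _ /d; exact: is_derive_dq_cvg. Qed.

Lemma phi1_dnear_neq0 x : J x -> \forall h \near (0:R)^', phi1 (x + h) != 0.
Proof. by move/J_dnear; apply: filterS => h; exact: phi1_J_neq0. Qed.

Lemma dq_U x : J x -> dq U x @ (0:R)^' --> dU x.
Proof.
move=> Jx; have := dq_div (dq_phi2 Jx) (dq_phi1 Jx) (phi1_J_neq0 Jx) (phi1_dnear_neq0 Jx).
by congr (_ --> _); rewrite /dU /Wr; congr (_ / _); ring.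
Qed.

Lemma dU_gt0 x : J x -> 0 < dU x.
Proof. by move=> Jx; rewrite divr_gt0 ?W_J_gt0 ?exprn_gt0 ?phi1_J_gt0. Qed.

Lemma U_incr x y : J x -> J y -> x < y -> U x < U y.
Proof.
move=> Jx Jy xy; have [a [Ja ax]] := J_left Jx; have [b [Jb yb]] := J_right Jy.
have Jab z : z \in `]a, b[ -> J z.
  by rewrite in_itv /= => /andP [h1 h2]; apply: (J_between Ja Jb); exact: ltW.
have dUz z : z \in `]a, b[ -> derivable U z 1 /\ derive1 U z = dU z.
  by move/Jab => Jz; exact: dq_cvg_derive (dq_U Jz).
apply: (@gtr0_derive1_lt_oo _ U a b).
- by move=> z /dUz [].
- by move=> z hz; have [_ ->] := dUz z hz; apply/dU_gt0/Jab.
- move=> z hz; apply/differentiable_continuous/derivable1_diffP.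
  have hz' : z \in `]a, b[ by move: hz; rewrite inE.
  by have [] := dUz z hz'.
- by rewrite in_itv /= ax (lt_trans xy yb).
- by rewrite in_itv /= yb (lt_trans ax xy).
- exact: xy.
Qed.

Lemma U_sub_gt0 x y : J x -> J y -> x < y -> 0 < U y - U x.
Proof. by move=> Jx Jy xy; rewrite subr_gt0; exact: U_incr. Qed.

Lemma U_neq x y : J x -> J y -> x != y -> U y - U x != 0.
Proof.
move=> Jx Jy; rewrite neq_lt => /orP [xy|yx]; first by rewrite gt_eqF ?U_sub_gt0.
by rewrite -opprB oppr_eq0 gt_eqF ?U_sub_gt0.
Qed.

(* U increases to its limit 0 at x0. *)
Lemma U_lt0 x : J x -> U x < 0.
Proof.
move=> Jx; have [y [Jy xy]] := J_right Jx; apply: (lt_le_trans (U_incr Jx Jy xy)).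
have ev : \forall z \near toward x0, U y <= U z.
  apply: (near_toward (J_lt Jy)) => z yz zx; apply/ltW/U_incr => //.
  by split => //; exact: lt_trans (J_gt Jy) yz.
exact: (closed_cvg _ (@closed_ge _ (U y)) ev _ phi2_o_phi1).
Qed.

Lemma U_T_le x : J x -> U T <= U x.
Proof.
move=> Jx; have c : (fun h => U (T + h)) @ (0:R)^'+ --> U T.
  apply: cvgM; first exact: C1_Ico_cvg_right phi2_C1.
  by apply: cvgV; [exact/lt0r_neq0/phi1_gt0/Ico_T | exact: C1_Ico_cvg_right phi1_C1].
have xT : 0 < x - T by rewrite subr_gt0; exact: J_gt.
have ev : \forall h \near (0:R)^'+, U (T + h) <= U x.
  near=> h; have h0 : 0 < h by near: h; exact: nbhs_right_gt.
  have h1 : h < x - T by near: h; exact: nbhs_right_lt.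
  apply/ltW/U_incr => //; last lra.
  by split; [lra | apply: le_lt_trans (J_lt Jx); rewrite lee_fin; lra].
exact: (closed_cvg _ (@closed_le _ (U x)) ev _ c).
Unshelve. all: by end_near. Qed.

Lemma gen_convex_HU t1 t2 t3 : J t1 -> J t2 -> J t3 -> t1 < t2 -> t2 < t3 ->
  0 <= (U t2 - U t1) * (Hf t3 - Hf t2) - (U t3 - U t2) * (Hf t2 - Hf t1).
Proof.
move=> J1 J2 J3 h12 h23; have := f_convex J1 J2 J3 h12 h23; rewrite det_mx33_funs.
have n1 := phi1_J_neq0 J1; have n2 := phi1_J_neq0 J2; have n3 := phi1_J_neq0 J3.
have -> : (U t2 - U t1) * (Hf t3 - Hf t2) - (U t3 - U t2) * (Hf t2 - Hf t1) =
  (phi1 t1 * (phi2 t2 * f t3 - phi2 t3 * f t2)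
   - phi1 t2 * (phi2 t1 * f t3 - phi2 t3 * f t1)
   + phi1 t3 * (phi2 t1 * f t2 - phi2 t2 * f t1)) / (phi1 t1 * phi1 t2 * phi1 t3).
  by rewrite /U /Hf; field; rewrite n1 n2 n3.
by move=> hd; rewrite divr_ge0 // ltW // !mulr_gt0 ?phi1_J_gt0.
Qed.

Lemma slope_chord t1 t2 t3 : J t1 -> J t2 -> J t3 -> t1 < t2 -> t2 < t3 ->
  slope t1 t2 <= slope t1 t3 /\ slope t1 t3 <= slope t2 t3.
Proof.
move=> J1 J2 J3 h12 h23.
have := mediant_between (U_sub_gt0 J1 J2 h12) (U_sub_gt0 J2 J3 h23)
  (gen_convex_HU J1 J2 J3 h12 h23).
have -> : (Hf t2 - Hf t1) + (Hf t3 - Hf t2) = Hf t3 - Hf t1 by ring.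
by have -> : (U t2 - U t1) + (U t3 - U t2) = U t3 - U t1 by ring.
Qed.

Lemma slope_le p q r s : J p -> J q -> J r -> J s -> p < q -> r < s ->
  p <= r -> q <= s -> slope p q <= slope r s.
Proof.
move=> Jp Jq Jr Js pq rs pr qs; have h1 : slope p q <= slope p s.
  move: qs; rewrite le_eqVlt => /orP [/eqP -> //| qs].
  by have [] := slope_chord Jp Jq Js pq qs.
apply: (le_trans h1); move: pr; rewrite le_eqVlt => /orP [/eqP -> //| pr].
by have [] := slope_chord Jp Jr Js pr rs.
Qed.

Lemma slopeC x y : slope x y = slope y x.
Proof.
rewrite /slope; have [e|hn] := eqVneq (U y - U x) 0.
  have e' : U x - U y = 0 by rewrite -opprB e oppr0.
  by rewrite e e' !invr0 !mulr0.
by field; rewrite hn -opprB oppr_eq0 hn.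
Qed.

Lemma Hf_slope x y : J x -> J y -> x < y -> Hf y = Hf x + slope x y * (U y - U x).
Proof.
move=> Jx Jy xy; rewrite /slope divfK; first by rewrite addrC subrK.
exact/lt0r_neq0/U_sub_gt0.
Qed.

Definition lslopes x := [set s | exists y, [/\ J y, y < x & s = slope y x]].
Definition lslope x := sup (lslopes x).

Lemma lslopes_ub x z : J x -> J z -> x < z -> ubound (lslopes x) (slope x z).
Proof. by move=> Jx Jz xz _ [y [Jy yx ->]]; apply: slope_le => //; exact: ltW. Qed.

Lemma has_sup_lslopes x : J x -> has_sup (lslopes x).
Proof.
move=> Jx; split; first by have [y [Jy yx]] := J_left Jx; exists (slope y x), y.
by have [z [Jz xz]] := J_right Jx; exists (slope x z); exact: lslopes_ub.
Qed.

Lemma slope_le_lslope x y : J x -> J y -> y < x -> slope y x <= lslope x.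
Proof. by move=> Jx Jy yx; apply: sup_upper_bound; [exact: has_sup_lslopes | exists y]. Qed.

Lemma lslope_le_slope x z : J x -> J z -> x < z -> lslope x <= slope x z.
Proof. by move=> Jx Jz xz; apply: ge_sup; [case: (has_sup_lslopes Jx) | exact: lslopes_ub]. Qed.

Lemma lslope_incr x y : J x -> J y -> x < y -> lslope x <= lslope y.
Proof.
by move=> Jx Jy xy; apply: le_trans (lslope_le_slope Jx Jy xy) _; exact: slope_le_lslope.
Qed.

Definition kink x := exists2 e, 0 < e & forall z, J z -> x < z -> lslope x + e <= slope x z.

Lemma not_kink_slope_cvg x : J x -> ~ kink x ->
  (fun h => slope x (x + h)) @ (0:R)^' --> lslope x.
Proof.
move=> Jx nk; apply/cvgrPdist_lt => e e0.
have [_ [y [Jy yx ->]]] := sup_adherent e0 (has_sup_lslopes Jx).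
rewrite -/(lslope x) => hy.
have [z [Jz xz hz]] : exists z, [/\ J z, x < z & slope x z < lslope x + e].
  apply: contrapT => hne; apply: nk; exists e => // z Jz xz.
  by rewrite leNgt; apply/negP => hlt; apply: hne; exists z.
have d0 : 0 < Num.min (x - y) (z - x) by rewrite lt_min !subr_gt0 yx xz.
near=> h.
have hn : h != 0 by near: h; exact: nbhs_dnbhs_neq.
have : `|h| < Num.min (x - y) (z - x) by near: h; exact: dnbhs0_lt.
rewrite lt_min => /andP [h1 h2].
have := ler_norm h; have : - `|h| <= h by rewrite lerNl ler_normr lexx orbT.
move=> hn1 hn2; have Jxh : J (x + h) by apply: (J_between Jy Jz); lra.
rewrite ltr_norml; case: (ltgtP h 0) hn => // hs _.
- have Hs : slope y x <= slope (x + h) x by apply: slope_le => //; lra.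
  have Hl : slope (x + h) x <= lslope x by apply: slope_le_lslope => //; lra.
  by rewrite slopeC; apply/andP; split; lra.
- have Hs : slope x (x + h) <= slope x z by apply: slope_le => //; lra.
  have Hl : lslope x <= slope x (x + h) by apply: lslope_le_slope => //; lra.
  by apply/andP; split; lra.
Unshelve. all: by end_near. Qed.

Lemma slope_dq x : J x -> \forall h \near (0:R)^',
  dq U x h != 0 /\ slope x (x + h) = dq Hf x h / dq U x h.
Proof.
move=> Jx; near=> h.
have hn : h != 0 by near: h; exact: nbhs_dnbhs_neq.
have ud : U (x + h) - U x != 0.
  apply: U_neq => //; first by near: h; exact: J_dnear.
  by rewrite -subr_eq0 opprD addrA subrr add0r oppr_eq0.
split; first by rewrite /dq mulf_neq0 ?invr_eq0.
by rewrite /slope /dq; field; rewrite hn ud.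
Unshelve. all: by end_near. Qed.

Lemma f_Hf x : J x -> f x = phi1 x * Hf x.
Proof. by move=> Jx; rewrite /Hf mulrC divfK // phi1_J_neq0. Qed.

Definition df x := dphi1 x * Hf x + phi1 x * (lslope x * dU x).

Lemma not_kink_dq_f x : J x -> ~ kink x -> dq f x @ (0:R)^' --> df x.
Proof.
move=> Jx nk; have dqHf : dq Hf x @ (0:R)^' --> lslope x * dU x.
  have e : \forall h \near (0:R)^', slope x (x + h) * dq U x h = dq Hf x h.
    by apply: filterS (slope_dq Jx) => h [nz ->]; rewrite divfK.
  apply: cvg_near_eq e _.
  by apply: cvgM; [exact: not_kink_slope_cvg | exact: dq_U].
apply: (dq_eq_near _ (dqM (dq_phi1 Jx) dqHf)).
by apply: filterS (near_Ioo_e Jx) => h Jh; rewrite -f_Hf.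
Qed.

(* At a kink the one-sided limits of the slopes, lslope x and at least lslope x + e, differ. *)
Lemma kink_not_derivable x : J x -> kink x -> ~ derivable f x 1.
Proof.
move=> Jx [e e0 he] /derivable_dq_cvg dqf.
have := dq_div dqf (dq_phi1 Jx) (phi1_J_neq0 Jx) (phi1_dnear_neq0 Jx).
set d := (_ / _) => dqHf.
have cS : (fun h => slope x (x + h)) @ (0:R)^' --> d * (dU x)^-1.
  have eS : \forall h \near (0:R)^', dq Hf x h / dq U x h = slope x (x + h).
    by apply: filterS (slope_dq Jx) => h [_ ->].
  apply: cvg_near_eq eS _.
  by apply: cvgM => //; apply: cvgV; [exact/lt0r_neq0/dU_gt0 | exact: dq_U].
have evR : \forall h \near (0:R)^'+, lslope x + e <= slope x (x + h).
  near=> h; apply: he; last by rewrite ltrDl; near: h; exact: nbhs_right_gt.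
  by near: h; apply: cvg_within; exact: near_Ioo_e.
have evL : \forall h \near (0:R)^'-, slope x (x + h) <= lslope x.
  near=> h; rewrite slopeC; apply: slope_le_lslope => //.
    by near: h; apply: cvg_within; exact: near_Ioo_e.
  by rewrite gtrDl; near: h; exact: nbhs_left_lt.
have : lslope x + e <= d * (dU x)^-1.
  exact: closed_cvg _ (@closed_ge _ (lslope x + e)) evR _ (cvg_dnbhs_at_right cS).
have : d * (dU x)^-1 <= lslope x.
  exact: closed_cvg _ (@closed_le _ (lslope x)) evL _ (cvg_dnbhs_at_left cS).
lra.
Unshelve. all: by end_near. Qed.

Lemma derivable_f_not_kink x : J x -> derivable f x 1 -> ~ kink x /\ derive1 f x = df x.
Proof.
move=> Jx dfx; have nk : ~ kink x by move=> k; exact: kink_not_derivable Jx k dfx.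
by split => //; have [_ ->] := dq_cvg_derive (not_kink_dq_f Jx nk).
Qed.

Definition nondiff := [set x | J x /\ ~ derivable f x 1].

Lemma nondiff_kink x : nondiff x -> kink x.
Proof.
case=> Jx nd; apply: contrapT => nk; apply: nd.
by have [] := dq_cvg_derive (not_kink_dq_f Jx nk).
Qed.

Lemma J_nondiffC x : (J `\` nondiff) x -> J x /\ derivable f x 1.
Proof. by case=> Jx nN; split => //; apply: contrapT => nd; apply: nN. Qed.

(* Tag each kink x with a rational strictly between lslope x and the slopes to its right:
   for kinks x < y the tag of x lies below slope x y <= lslope y, hence below that of y. *)
Lemma countable_nondiff : countable nondiff.
Proof.
have hq x : exists r : rat, kink x ->
    lslope x < ratr r /\ forall z, J z -> x < z -> ratr r < slope x z.
  have [[e e0 he]|nk] := pselect (kink x); last by exists 0%Q.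
  have /rat_in_itvoo [r] : lslope x < lslope x + e by rewrite ltrDl.
  rewrite in_itv /= => /andP [r1 r2].
  by exists r => _; split => // z Jz xz; apply: lt_le_trans r2 _; exact: he.
have [q hq'] := boolp.choice hq.
apply/countable_injP; exists (fun x => pickle (q x)) => x y.
rewrite !inE => Nx Ny /(pcan_inj pickleK) qe.
have [kx1 kx2] := hq' x (nondiff_kink Nx); have [ky1 ky2] := hq' y (nondiff_kink Ny).
case: Nx Ny => Jx _ [Jy _]; case: (ltgtP x y) => // xy.
- by have := kx2 y Jy xy; have := slope_le_lslope Jy Jx xy; rewrite qe; lra.
- by have := ky2 x Jx xy; have := slope_le_lslope Jx Jy xy; rewrite -qe; lra.
Qed.

Lemma f2starE x : J x -> derivable f x 1 -> f2star phi1 dphi1 phi2 dphi2 f x = lslope x.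
Proof.
move=> Jx dfx; rewrite /f2star /Wr; have [_ ->] := derivable_f_not_kink Jx dfx.
have := lt0r_neq0 (W_J_gt0 Jx); have := phi1_J_neq0 Jx.
by rewrite (f_Hf Jx) /df /dU /Wr => p w; field; rewrite w p.
Qed.

Lemma f1starE x : J x -> derivable f x 1 ->
  f1star phi1 dphi1 phi2 dphi2 f x = Hf x - U x * lslope x.
Proof.
move=> Jx dfx; rewrite /f1star /Wr; have [_ ->] := derivable_f_not_kink Jx dfx.
have := lt0r_neq0 (W_J_gt0 Jx); have := phi1_J_neq0 Jx.
by rewrite (f_Hf Jx) /df /dU /U /Wr => p w; field; rewrite w p.
Qed.

Lemma FstarE x : J x -> derivable f x 1 ->
  Fstar T phi1 dphi1 phi2 dphi2 f x = phi1 T * (Hf x + (U T - U x) * lslope x).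
Proof.
move=> Jx dfx; rewrite /Fstar f1starE // f2starE //.
have pT := lt0r_neq0 (phi1_gt0 Ico_T); have px := phi1_J_neq0 Jx.
by rewrite /U; field; rewrite pT px.
Qed.

Lemma f2star_incr : incr_on (J `\` nondiff) (f2star phi1 dphi1 phi2 dphi2 f).
Proof.
move=> x y /J_nondiffC [Jx dx] /J_nondiffC [Jy dy].
rewrite le_eqVlt => /orP [/eqP -> //| xy].
by rewrite !f2starE //; exact: lslope_incr.
Qed.

Lemma f1star_incr : incr_on (J `\` nondiff) (f1star phi1 dphi1 phi2 dphi2 f).
Proof.
move=> x y /J_nondiffC [Jx dx] /J_nondiffC [Jy dy].
rewrite le_eqVlt => /orP [/eqP -> //| xy].
rewrite !f1starE // (Hf_slope Jx Jy xy) -subr_ge0.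
have -> : Hf x + slope x y * (U y - U x) - U y * lslope y - (Hf x - U x * lslope x) =
  (slope x y - lslope x) * (U y - U x) + (- U y) * (lslope y - lslope x) by ring.
have h1 : 0 <= slope x y - lslope x by rewrite subr_ge0 lslope_le_slope.
have h2 : 0 <= U y - U x by exact/ltW/U_sub_gt0.
have h3 : 0 <= - U y by rewrite oppr_ge0; exact/ltW/U_lt0.
have h4 : 0 <= lslope y - lslope x by rewrite subr_ge0 lslope_incr.
by rewrite addr_ge0 // mulr_ge0.
Qed.

Lemma Fstar_decr : decr_on (J `\` nondiff) (Fstar T phi1 dphi1 phi2 dphi2 f).
Proof.
move=> x y /J_nondiffC [Jx dx] /J_nondiffC [Jy dy].
rewrite le_eqVlt => /orP [/eqP -> //| xy].
rewrite !FstarE // (Hf_slope Jx Jy xy) ler_pM2l ?phi1_gt0 ?Ico_T // -subr_ge0.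
have -> : Hf x + (U T - U x) * lslope x
    - (Hf x + slope x y * (U y - U x) + (U T - U y) * lslope y) =
  (lslope y - slope x y) * (U y - U x) + (U x - U T) * (lslope y - lslope x) by ring.
have h1 : 0 <= lslope y - slope x y by rewrite subr_ge0 slope_le_lslope.
have h2 : 0 <= U y - U x by exact/ltW/U_sub_gt0.
have h3 : 0 <= U x - U T by rewrite subr_ge0 U_T_le.
have h4 : 0 <= lslope y - lslope x by rewrite subr_ge0 lslope_incr.
by rewrite addr_ge0 // mulr_ge0.
Qed.

Lemma phi2_lt0 x : J x -> phi2 x < 0.
Proof.
move=> Jx; have := U_lt0 Jx; rewrite /U => h.
by rewrite -(divfK (phi1_J_neq0 Jx) (phi2 x)) pmulr_llt0 ?phi1_J_gt0.
Qed.

Lemma sg_Fstar_incr : incr_on (J `\` nondiff)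
  (fun t => Num.sg (phi2 t) * Fstar T phi1 dphi1 phi2 dphi2 f t).
Proof.
move=> x y Dx Dy xy; have [Jx _] := J_nondiffC Dx; have [Jy _] := J_nondiffC Dy.
by rewrite !ltr0_sg ?phi2_lt0 // !mulN1r lerN2; exact: Fstar_decr.
Qed.

Lemma C1_lipschitz_seg_J (phi dphi : R -> R) a b :
  C1_Ico T x0 phi dphi -> J a -> J b -> lipschitz_seg a b phi.
Proof.
case=> hd _ hc Ja Jb; apply: C1_lipschitz_seg => [x hx|].
  exact/hd/(J_itv Ja Jb hx).
apply: continuous_subspaceW hc => x /=; rewrite in_itv /= => hx.
exact/J_Ico/(J_itv Ja Jb hx).
Qed.

Lemma U_lipschitz_seg a b : J a -> J b -> lipschitz_seg a b U.
Proof.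
move=> Ja Jb; have [ab|ba] := leP a b; last first.
  by exists 0; split => // x y /andP [h1 h2]; lra.
have cont : {within `[a, b], continuous phi1}.
  apply: derivable_within_continuous => x; rewrite in_itv /= => hx.
  by case: phi1_C1 => hd _ _; have [] := hd x (J_itv Ja Jb hx).
have [c hc1 hc2] := EVT_min ab cont.
have Jc : J c by apply: (J_itv Ja Jb); move: hc1; rewrite in_itv.
apply: lipschitz_segM; first exact: C1_lipschitz_seg_J phi2_C1 Ja Jb.
apply: (lipschitz_segV (phi1_J_gt0 Jc)); last exact: C1_lipschitz_seg_J phi1_C1 Ja Jb.
by move=> x hx; apply: hc2; rewrite in_itv.
Qed.

(* On [a, b] the slopes are squeezed between slope a' a and slope b b' for a' < a, b < b'. *)
Lemma Hf_lipschitz_seg a b : J a -> J b -> lipschitz_seg a b Hf.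
Proof.
move=> Ja Jb; have [a' [Ja' a'a]] := J_left Ja; have [b' [Jb' bb']] := J_right Jb.
have [MU [MU0 hU]] := U_lipschitz_seg Ja Jb.
pose K := `|slope a' a| + `|slope b b'|.
have hK x y : a <= x <= b -> a <= y <= b -> x < y -> `|slope x y| <= K.
  move=> hx hy xy; have Jx := J_itv Ja Jb hx; have Jy := J_itv Ja Jb hy.
  case/andP: hx => hx1 hx2; case/andP: hy => hy1 hy2.
  have l1 : slope a' a <= slope x y by apply: slope_le => //; lra.
  have l2 : slope x y <= slope b b' by apply: slope_le => //; lra.
  have n1 : - `|slope a' a| <= slope a' a by rewrite lerNl ler_normr lexx orbT.
  have n2 := ler_norm (slope b b').
  have := normr_ge0 (slope a' a); have := normr_ge0 (slope b b').
  by rewrite ler_norml /K => *; apply/andP; split; lra.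
exists (K * MU); split; first by rewrite mulr_ge0 ?addr_ge0.
move=> x y hx hy; wlog xy : x y hx hy / x <= y.
  move=> H; have [|/ltW yx] := leP x y; first exact: H.
  by rewrite distrC [`|y - x|]distrC; exact: H.
move: xy; rewrite le_eqVlt => /orP [/eqP ->|xy]; first by rewrite !subrr normr0 mulr0.
have Jx := J_itv Ja Jb hx; have Jy := J_itv Ja Jb hy.
rewrite (Hf_slope Jx Jy xy) addrC addKr normrM -mulrA.
by apply: ler_pM => //; [exact: hK | exact: hU].
Qed.

Lemma f_abs_cont a b : T < a -> a <= b -> (b%:E < x0)%E -> abs_cont_on a b f.
Proof.
move=> Ta ab bx0; have Jb : J b by split => //; exact: lt_le_trans Ta ab.
have Ja : J a by split => //; apply: le_lt_trans bx0; rewrite lee_fin.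
apply/lipschitz_seg_abs_cont/(lipschitz_seg_eq _ (lipschitz_segM
  (C1_lipschitz_seg_J phi1_C1 Ja Jb) (Hf_lipschitz_seg Ja Jb))).
by move=> x hx; rewrite -f_Hf //; exact: J_itv Ja Jb hx.
Qed.

Lemma phi2_J_neq0 x : J x -> phi2 x != 0.
Proof. by move/phi2_lt0/ltr0_neq0. Qed.

Lemma phi2_dnear_neq0 x : J x -> \forall h \near (0:R)^', phi2 (x + h) != 0.
Proof. by move/J_dnear; apply: filterS => h; exact: phi2_J_neq0. Qed.

Lemma derivable_div_phi2 x :
  J x -> derivable (fun y => f y / phi2 y) x 1 -> derivable f x 1.
Proof.
move=> Jx /derivable_dq_cvg dG.
have e : \forall h \near (0:R), f (x + h) / phi2 (x + h) * phi2 (x + h) = f (x + h).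
  by apply: filterS (near_Ioo_e Jx) => h Jh; rewrite divfK // phi2_J_neq0.
by have [] := dq_cvg_derive (dq_eq_near e (dqM dG (dq_phi2 Jx))).
Qed.

Definition dratio x :=
  derive1 (fun y => f y / phi2 y) x / derive1 (fun y => phi1 y / phi2 y) x.
Definition dratio_dom := [set x | J x /\ derivable (fun y => f y / phi2 y) x 1].

Lemma dratioE x : dratio_dom x -> dratio x = Hf x - U x * lslope x.
Proof.
case=> Jx /(derivable_div_phi2 Jx) /[dup] dfx /derivable_dq_cvg dqf.
rewrite /dratio -f1starE // /f1star /Wr.
have [_ ->] := dq_cvg_derive (dq_div dqf (dq_phi2 Jx) (phi2_J_neq0 Jx) (phi2_dnear_neq0 Jx)).
have [_ ->] :=
  dq_cvg_derive (dq_div (dq_phi1 Jx) (dq_phi2 Jx) (phi2_J_neq0 Jx) (phi2_dnear_neq0 Jx)).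
have := lt0r_neq0 (W_J_gt0 Jx); rewrite /Wr => w.
have w' : dphi1 x * phi2 x - phi1 x * dphi2 x != 0 by rewrite -oppr_eq0 opprB.
by field; rewrite w w' phi2_J_neq0.
Qed.

Lemma slope_le_dratio m y : J m -> J y -> m < y ->
  Hf m - U m * slope m y <= Hf y - U y * lslope y.
Proof.
move=> Jm Jy my; rewrite (Hf_slope Jm Jy my).
have : - U y * slope m y <= - U y * lslope y.
  by rewrite ler_wpM2l ?slope_le_lslope // oppr_ge0 ltW ?U_lt0.
lra.
Qed.

(* Since U y -> 0, letting z -> x0 in Hf z >= Hf y + lslope y * (U z - U y). *)
Lemma dratio_le_lim y l : J y -> Hf @ toward x0 --> l -> Hf y - U y * lslope y <= l.
Proof.
move=> Jy hl; have ev : \forall z \near toward x0, Hf y - U y * lslope y <= Hf z - lslope y * U z.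
  apply: filterS (J_near_toward Jy) => z [Jz yz]; rewrite (Hf_slope Jy Jz yz).
  have : lslope y * (U z - U y) <= slope y z * (U z - U y).
    by rewrite ler_wpM2r ?lslope_le_slope // ltW ?U_sub_gt0.
  lra.
have : (fun z => Hf z - lslope y * U z) @ toward x0 --> l - lslope y * 0.
  by apply: cvgB => //; apply: cvgM => //; exact: cvg_cst.
rewrite mulr0 subr0 => c.
exact: (closed_cvg _ (@closed_ge _ (Hf y - U y * lslope y)) ev _ c).
Qed.

Definition rslopes m := [set s | exists y, [/\ J y, m < y & s = slope m y]].

Lemma slope_incr_right m y z : J m -> J y -> J z -> m < y -> y <= z ->
  slope m y <= slope m z.
Proof. by move=> Jm Jy Jz my yz; apply: slope_le => //; exact: lt_le_trans yz. Qed.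

Lemma slope_cvg_sup m : J m -> has_ubound (rslopes m) ->
  slope m @ toward x0 --> sup (rslopes m).
Proof.
move=> Jm bd; have [y1 [Jy1 my1]] := J_right Jm.
have hs : has_sup (rslopes m) by split => //; exists (slope m y1), y1.
apply/cvgrPdist_lt => e e0.
have [_ [y2 [Jy2 my2 ->]] hy2] := sup_adherent e0 hs.
apply: filterS (J_near_toward Jy2) => z [Jz y2z].
have := slope_incr_right Jm Jy2 Jz my2 (ltW y2z).
have : slope m z <= sup (rslopes m).
  by apply: sup_upper_bound => //; exists z; split => //; exact: lt_trans y2z.
by move=> h1 h2; rewrite ger0_norm ?subr_ge0 //; lra.
Qed.

Lemma slope_cvg_pinfty m : J m -> ~ has_ubound (rslopes m) ->
  slope m @ toward x0 --> +oo.
Proof.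
move=> Jm nb; apply/cvgryPge => A.
have [y [Jy my hy]] : exists y, [/\ J y, m < y & A < slope m y].
  apply: contrapT => h; apply: nb; exists A => _ [y [Jy my ->]].
  by rewrite leNgt; apply/negP => hlt; apply: h; exists y.
apply: filterS (J_near_toward Jy) => z [Jz yz].
exact/ltW/(lt_le_trans hy)/(slope_incr_right Jm Jy Jz my (ltW yz)).
Qed.

Lemma Hf_slope_cvg m s : J m -> slope m @ toward x0 --> s ->
  Hf @ toward x0 --> Hf m - U m * s.
Proof.
move=> Jm hs; have e : \forall y \near toward x0, Hf m + slope m y * (U y - U m) = Hf y.
  by apply: filterS (J_near_toward Jm) => y [Jy my]; rewrite -Hf_slope.
apply: cvg_near_eq e _; have -> : Hf m - U m * s = Hf m + s * (0 - U m) by ring.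
apply: cvgD; first exact: cvg_cst.
by apply: cvgM => //; apply: cvgB => //; exact: cvg_cst.
Qed.

Lemma Hf_cvg_pinfty m : J m -> slope m @ toward x0 --> +oo -> Hf @ toward x0 --> +oo.
Proof.
move=> Jm hs; have [y1 [Jy1 my1]] := J_right Jm.
apply: (cvgry_le_near _ (cvgry_affine (Hf m) (U_sub_gt0 Jm Jy1 my1) hs)).
apply: filterS2 (J_near_toward Jy1) (cvgry_ge hs 0) => z [Jz y1z] s0.
rewrite (Hf_slope Jm Jz (lt_trans my1 y1z)) lerD2l mulrC ler_wpM2l //.
by rewrite lerD2r ltW ?U_incr.
Qed.

Lemma Hf_dratio_limit : exists l : \bar R,
  (fun x => (Hf x)%:E) @ toward x0 --> l /\
  (fun x => (dratio x)%:E) @ within dratio_dom (toward x0) --> l.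
Proof.
have [m Jm] := J_nonempty.
have lower : \forall y \near within dratio_dom (toward x0),
    Hf m - U m * slope m y <= dratio y.
  rewrite near_withinE; apply: filterS (J_near_toward Jm) => y [Jy my] Dy.
  by rewrite dratioE //; exact: slope_le_dratio.
have mU : 0 < - U m by rewrite oppr_gt0 U_lt0.
have [bd|nbd] := pselect (has_ubound (rslopes m)).
  have hS := slope_cvg_sup Jm bd; have hH := Hf_slope_cvg Jm hS.
  set l := Hf m - U m * sup (rslopes m) in hH *.
  have upper : \forall y \near within dratio_dom (toward x0), dratio y <= l.
    rewrite near_withinE; apply: nearW => y Dy.
    by rewrite dratioE //; exact: dratio_le_lim Dy.1 hH.
  exists l%:E; split; apply: cvg_EFin_real => //.
  have sq : \forall y \near within dratio_dom (toward x0),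
      Hf m - U m * slope m y <= dratio y <= l.
    by apply: filterS2 lower upper => y h1 h2; apply/andP.
  apply: (squeeze_cvgr sq); last exact: cvg_cst.
  apply: cvg_within_filter; apply: cvgB; first exact: cvg_cst.
  by apply: cvgM => //; exact: cvg_cst.
have hS := slope_cvg_pinfty Jm nbd.
exists +oo%E; split; apply/cvgeryP; first exact: Hf_cvg_pinfty hS.
apply: cvgry_le_near lower _; apply: cvg_within_filter.
have -> : (fun y => Hf m - U m * slope m y) = (fun y => Hf m + - U m * slope m y).
  by apply/funext => y; rewrite mulNr.
exact: cvgry_affine.
Qed.

Definition const_sign_on (D : set R) (k : R -> R) :=
  (forall x, D x -> 0 < k x) \/ (forall x, D x -> k x < 0).

Lemma const_sign_on_neq0 D k x : const_sign_on D k -> D x -> k x != 0.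
Proof. by case=> hk Dx; [exact/lt0r_neq0/hk | exact/ltr0_neq0/hk]. Qed.

Lemma const_sign_onN D k : const_sign_on D (fun x => - k x) -> const_sign_on D k.
Proof. by case=> hk; [right|left] => x /hk; rewrite ?oppr_gt0 ?oppr_lt0. Qed.

Lemma incr_const_sign_ends (k : R -> R) : (forall x y, J x -> J y -> x < y -> k x < k y) ->
  (exists z, J z /\ const_sign_on [set x | J x /\ x < z] k) /\
  (exists z, J z /\ const_sign_on [set x | J x /\ z < x] k).
Proof.
move=> hk; have [m Jm] := J_nonempty; split.
  have [[z [Jz zm kz]]|nz] := pselect (exists z, [/\ J z, z <= m & k z <= 0]).
    by exists z; split => //; right => x [Jx xz]; exact: lt_le_trans (hk _ _ Jx Jz xz) kz.
  exists m; split => //; left => x [Jx xm]; rewrite ltNge; apply/negP => h; apply: nz.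
  by exists x; split => //; exact: ltW.
have [[z [Jz mz kz]]|nz] := pselect (exists z, [/\ J z, m <= z & 0 <= k z]).
  by exists z; split => //; left => x [Jx zx]; exact: le_lt_trans kz (hk _ _ Jz Jx zx).
exists m; split => //; right => x [Jx mx]; rewrite ltNge; apply/negP => h; apply: nz.
by exists x; split => //; exact: ltW.
Qed.

Variables (a1 a2 : R).

Definition lin_U (c1 c2 : R) x := c1 + c2 * U x.
Definition phit (c1 c2 : R) x := c1 * phi1 x + c2 * phi2 x.
Definition gq (c1 c2 : R) x := (f x + a1 * phi1 x + a2 * phi2 x) / phit c1 c2 x.

Lemma lin_U_opp (c1 c2 : R) : lin_U (- c1) (- c2) = (fun x => - lin_U c1 c2 x).
Proof. by apply/funext => x; rewrite /lin_U; ring. Qed.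

Lemma gq_opp (c1 c2 : R) : gq (- c1) (- c2) = (fun x => - gq c1 c2 x).
Proof.
by apply/funext => x; rewrite /gq /phit !mulNr -opprD invrN mulrN.
Qed.

Lemma lin_U_const_sign_ends (c1 c2 : R) : (c1 != 0) || (c2 != 0) ->
  (exists z, J z /\ const_sign_on [set x | J x /\ x < z] (lin_U c1 c2)) /\
  (exists z, J z /\ const_sign_on [set x | J x /\ z < x] (lin_U c1 c2)).
Proof.
move=> hc; have incr (d1 d2 : R) : 0 < d2 ->
    forall x y, J x -> J y -> x < y -> lin_U d1 d2 x < lin_U d1 d2 y.
  by move=> d2p x y Jx Jy xy; rewrite ltrD2l ltr_pM2l // U_incr.
have [c2n|c2p|c20] := ltgtP c2 0; last 2 first.
- exact: incr_const_sign_ends (incr _ _ c2p).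
- rewrite c20; move: hc; rewrite c20 eqxx orbF => c1n; have [m Jm] := J_nonempty.
  have cs D : const_sign_on D (lin_U c1 0).
    have -> : lin_U c1 0 = fun=> c1 by apply/funext => x; rewrite /lin_U mul0r addr0.
    by case: (ltgtP c1 0) c1n => // h _; [right|left].
  by split; exists m.
have [[z [Jz hz]] [z' [Jz' hz']]] :=
  incr_const_sign_ends (incr (- c1) (- c2) ltac:(by rewrite oppr_gt0)).
rewrite lin_U_opp in hz hz'.
by split; [exists z | exists z']; split => //; exact: const_sign_onN.
Qed.

Lemma phit_neq0 (c1 c2 : R) x : J x -> lin_U c1 c2 x != 0 -> phit c1 c2 x != 0.
Proof.
move=> Jx hl; have px := phi1_J_neq0 Jx.
have -> : phit c1 c2 x = phi1 x * lin_U c1 c2 x by rewrite /phit /lin_U /U; field.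
by rewrite mulf_neq0.
Qed.

Lemma gq_gen_convex (c1 c2 : R) t1 t2 t3 : J t1 -> J t2 -> J t3 ->
  lin_U c1 c2 t1 != 0 -> lin_U c1 c2 t2 != 0 -> lin_U c1 c2 t3 != 0 ->
  (U t2 - U t1) * lin_U c1 c2 t3 * (gq c1 c2 t3 - gq c1 c2 t2)
  - (U t3 - U t2) * lin_U c1 c2 t1 * (gq c1 c2 t2 - gq c1 c2 t1)
  = (U t2 - U t1) * (Hf t3 - Hf t2) - (U t3 - U t2) * (Hf t2 - Hf t1).
Proof.
move=> J1 J2 J3 l1 l2 l3.
have q1 := phit_neq0 J1 l1; have q2 := phit_neq0 J2 l2; have q3 := phit_neq0 J3 l3.
have n1 := phi1_J_neq0 J1; have n2 := phi1_J_neq0 J2; have n3 := phi1_J_neq0 J3.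
move: q1 q2 q3 l1 l2 l3; rewrite /gq /phit /lin_U /U /Hf => q1 q2 q3 l1 l2 l3.
by field; rewrite q1 q2 q3 n1 n2 n3.
Qed.

Lemma three_point_incr_gq (c1 c2 : R) D : D `<=` J -> (forall x, D x -> 0 < lin_U c1 c2 x) ->
  three_point_incr D (gq c1 c2).
Proof.
move=> DJ hp t1 t2 t3 /[dup] D1 /DJ J1 /[dup] D2 /DJ J2 /[dup] D3 /DJ J3 h12 h23.
have := gen_convex_HU J1 J2 J3 h12 h23.
rewrite -(@gq_gen_convex c1 c2 _ _ _ J1 J2 J3) ?lt0r_neq0 ?hp //.
have A0 : 0 < (U t2 - U t1) * lin_U c1 c2 t3 by rewrite mulr_gt0 ?U_sub_gt0 ?hp.
have B0 : 0 < (U t3 - U t2) * lin_U c1 c2 t1 by rewrite mulr_gt0 ?U_sub_gt0 ?hp.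
move: A0 B0; set A := _ * lin_U c1 c2 t3; set B := _ * lin_U c1 c2 t1 => A0 B0 c.
split => h.
  have : 0 < B * (gq c1 c2 t2 - gq c1 c2 t1) by rewrite mulr_gt0 // subr_gt0.
  move=> h'; have : 0 < A * (gq c1 c2 t3 - gq c1 c2 t2) by lra.
  by rewrite pmulr_rgt0 // subr_gt0.
have : 0 <= B * (gq c1 c2 t2 - gq c1 c2 t1) by rewrite mulr_ge0 ?subr_ge0 // ltW.
move=> h'; have : 0 <= A * (gq c1 c2 t3 - gq c1 c2 t2) by lra.
by rewrite pmulr_rge0 // subr_ge0.
Qed.

Lemma gq_const_or_strmono_ends (c1 c2 : R) D : D `<=` J -> (exists m, D m) ->
  const_sign_on D (lin_U c1 c2) ->
  (exists c, D c /\ const_or_strmono_on [set x | D x /\ x < c] (gq c1 c2)) /\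
  (exists c, D c /\ const_or_strmono_on [set x | D x /\ c < x] (gq c1 c2)).
Proof.
move=> DJ Dne [hp|hn].
  have tp := three_point_incr_gq DJ hp.
  by split; [exact: three_point_incr_left_end | exact: three_point_incr_right_end].
have hp x : D x -> 0 < lin_U (- c1) (- c2) x by rewrite lin_U_opp /= oppr_gt0 => /hn.
have := three_point_incr_gq DJ hp; rewrite gq_opp => tp.
have [c [Dc h]] := three_point_incr_left_end tp Dne.
have [c' [Dc' h']] := three_point_incr_right_end tp Dne.
by split; [exists c | exists c']; split => //; exact: const_or_strmono_onN.
Qed.

Lemma gq_left_end (c1 c2 : R) : (c1 != 0) || (c2 != 0) ->
  exists b : R, [/\ T < b, (b%:E < x0)%E,
      (forall x, T < x -> x < b -> phit c1 c2 x != 0)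
    & const_or_strmono_on [set x | T < x /\ x < b] (gq c1 c2)].
Proof.
move=> hc; have [[z [Jz hz]] _] := lin_U_const_sign_ends hc.
have Dne : exists y, J y /\ y < z by have [y] := J_left Jz; exists y.
have [[c [[Jc cz] hco]] _] := gq_const_or_strmono_ends (fun x => @proj1 _ _) Dne hz.
have D x : T < x -> x < c -> J x /\ x < z.
  move=> Tx xc; split; last exact: lt_trans cz.
  by split => //; apply: lt_trans (J_lt Jc); rewrite lte_fin.
exists c; split; [exact: J_gt Jc | exact: J_lt Jc | |].
- by move=> x Tx xc; have Dx := D x Tx xc; exact: phit_neq0 (proj1 Dx) (const_sign_on_neq0 hz Dx).
- by apply: const_or_strmono_onS hco => x [Tx xc]; split => //; exact: D.
Qed.

Lemma gq_right_end (c1 c2 : R) : (c1 != 0) || (c2 != 0) ->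
  exists a : R, [/\ T < a, (a%:E < x0)%E,
      (forall x, Ioo_e a x0 x -> phit c1 c2 x != 0)
    & const_or_strmono_on (Ioo_e a x0) (gq c1 c2)].
Proof.
move=> hc; have [_ [z [Jz hz]]] := lin_U_const_sign_ends hc.
have [_ [c [[Jc zc] hco]]] := gq_const_or_strmono_ends (fun x => @proj1 _ _) (J_right Jz) hz.
have D x : Ioo_e c x0 x -> J x /\ z < x.
  by case=> cx xx0; split; [split => //; exact: lt_trans (J_gt Jc) cx | exact: lt_trans cx].
exists c; split; [exact: J_gt Jc | exact: J_lt Jc | |].
- by move=> x /D Dx; exact: phit_neq0 (proj1 Dx) (const_sign_on_neq0 hz Dx).
- by apply: const_or_strmono_onS hco => x /[dup] cx /D Dx; split => //; case: cx.
Qed.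
End convexity_wrt_ratio.

Theorem theorem6p1 (R : realType) (x0 : \bar R) (T : R)
  (phi1 dphi1 phi2 dphi2 f : R -> R) :
  (T%:E < x0)%E ->
  C1_Ico T x0 phi1 dphi1 ->
  C1_Ico T x0 phi2 dphi2 ->
  (fun x => phi2 x / phi1 x) @ toward x0 --> (0 : R) ->
  (forall x, Ico_e T x0 x -> 0 < phi1 x) ->
  (forall x, Ico_e T x0 x -> phi2 x != 0) ->
  (forall x, Ico_e T x0 x -> 0 < Wr phi1 dphi1 phi2 dphi2 x) ->
  gen_convex phi1 phi2 (Ioo_e T x0) f ->
  (* (i) *)
  (forall a b : R, T < a -> a <= b -> (b%:E < x0)%E -> abs_cont_on a b f)
  /\
  (* (ii) *)
  (exists N : set R,
     [/\ measurable N, (lebesgue_measure N = 0)%E &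
      [/\ (forall t, (Ioo_e T x0 `\` N) t -> derivable f t 1),
         incr_on (Ioo_e T x0 `\` N) (f2star phi1 dphi1 phi2 dphi2 f),
         ((incr_on (Ioo_e T x0 `\` N) (f1star phi1 dphi1 phi2 dphi2 f) /\
          decr_on (Ioo_e T x0 `\` N) (Fstar T phi1 dphi1 phi2 dphi2 f)) \/
         (decr_on (Ioo_e T x0 `\` N) (f1star phi1 dphi1 phi2 dphi2 f) /\
          incr_on (Ioo_e T x0 `\` N) (Fstar T phi1 dphi1 phi2 dphi2 f)))
       & incr_on (Ioo_e T x0 `\` N)
           (fun t => Num.sg (phi2 t) * Fstar T phi1 dphi1 phi2 dphi2 f t)]])
  /\
  (* (iii) *)
  (forall a1 a2 c1 c2 : R, (c1 != 0) || (c2 != 0) ->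
     let phit := fun x => c1 * phi1 x + c2 * phi2 x in
     let g := fun x => (f x + a1 * phi1 x + a2 * phi2 x) / phit x in
     (exists b : R, [/\ T < b, (b%:E < x0)%E,
        (forall x, T < x -> x < b -> phit x != 0)
      & const_or_strmono_on [set x | T < x /\ x < b] g]) /\
     (exists a : R, [/\ T < a, (a%:E < x0)%E,
        (forall x, Ioo_e a x0 x -> phit x != 0)
      & const_or_strmono_on (Ioo_e a x0) g]))
  /\
  (* (iv) *)
  (exists l : \bar R,
     (fun x => (f x / phi1 x)%:E) @ toward x0 --> l /\
     (fun x => (derive1 (fun y => f y / phi2 y) x
                / derive1 (fun y => phi1 y / phi2 y) x)%:E)
       @ within [set x | Ioo_e T x0 x /\ derivable (fun y => f y / phi2 y) x 1]
                (toward x0)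
       --> l).
Proof.
move=> Tx0 C1_1 C1_2 phi2_o_phi1 phi1_gt0 _ W_gt0 f_convex.
split; first exact: f_abs_cont C1_1 C1_2 phi1_gt0 W_gt0 f_convex.
split.
  have N0 := countable_nondiff C1_1 C1_2 phi1_gt0 W_gt0 f_convex.
  exists (nondiff x0 T f); split.
  - by apply: countable_measurable N0 => t; exact: measurable_set1.
  - exact: countable_lebesgue_measure0 N0.
  split; first by move=> t /J_nondiffC [].
  - exact: f2star_incr C1_1 C1_2 phi1_gt0 W_gt0 f_convex.
  - left; split; first exact: f1star_incr C1_1 C1_2 phi2_o_phi1 phi1_gt0 W_gt0 f_convex.
    exact: Fstar_decr Tx0 C1_1 C1_2 phi1_gt0 W_gt0 f_convex.
  - exact: sg_Fstar_incr Tx0 C1_1 C1_2 phi2_o_phi1 phi1_gt0 W_gt0 f_convex.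
split.
  move=> a1 a2 c1 c2 hc; split.
  - exact: gq_left_end Tx0 C1_1 C1_2 phi1_gt0 W_gt0 f_convex a1 a2 _ _ hc.
  - exact: gq_right_end Tx0 C1_1 C1_2 phi1_gt0 W_gt0 f_convex a1 a2 _ _ hc.
exact: Hf_dratio_limit Tx0 C1_1 C1_2 phi2_o_phi1 phi1_gt0 W_gt0 f_convex.
Qed.
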